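(* Let $B=\bigoplus_{i\in\mathbb{Z}}B_i$ be a $\mathbb{Z}$-graded noetherian normal integral domain of characteristic zero with $e(B)=1$. For each $d\in\Pi^*(B)$ such that $d$ is a unit of $B$: (a) every derivation $\delta:B^{(d)}\to B^{(d)}$ extends uniquely to a derivation $D:B\to B$; (b) every locally nilpotent derivation $\delta:B^{(d)}\to B^{(d)}$ extends uniquely to a locally nilpotent derivation $D:B\to B$.
   Context: $B^{(d)}=\bigoplus_{i\in\mathbb{Z}}B_{di}$. Derivations are not assumed homogeneous. For a $\mathbb{Z}$-graded domain $C$, $e(C)=\gcd\{i\in\mathbb{Z}:C_i\neq0\}$. $\Pi(B)$ is the set of prime numbers $p$ such that $p\mid e(B/\mathfrak{p})$ for some homogeneous prime ideal $\mathfrak{p}$ of $B$ of height $1$; $\Pi^*(B)$ is the set of positive integers $d$ not divisible by any element of $\Pi(B)$. *)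

From HB Require Import structures.
From mathcomp Require Import all_boot all_order all_algebra.
From mathcomp Require Import fraction.
Set Implicit Arguments. Unset Strict Implicit. Unset Printing Implicit Defensive.
Import Order.TTheory GRing.Theory Num.Theory.
Local Open Scope ring_scope.

Section Defs.
Variable B : idomainType.

Definition is_ideal (I : B -> Prop) : Prop :=
  [/\ I 0, (forall x y, I x -> I y -> I (x - y)) & (forall a x, I x -> I (a * x))].

Definition is_prime_ideal (I : B -> Prop) : Prop :=
  [/\ is_ideal I, ~ I 1 & (forall x y, I (x * y) -> I x \/ I y)].

Definition noetherian : Prop :=
  forall I : B -> Prop, is_ideal I ->
    exists s : seq B, forall x, I x <->
      exists c : seq B, size c = size s /\
        x = \sum_(i < size s) c`_i * s`_i.

Definition normal_domain : Prop :=
  forall x : {fraction B},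
    (exists p : {poly B}, p \is monic /\ root (map_poly (@tofrac B) p) x) ->
    exists b : B, x = tofrac b.

Definition char_zero : Prop := [pchar B] =i pred0.

(* Bi i is the homogeneous component B_i *)
Definition Z_grading (Bi : int -> B -> Prop) : Prop :=
  [/\ (forall i, Bi i 0) /\ (forall i x y, Bi i x -> Bi i y -> Bi i (x - y)),
      Bi 0 1,
      (forall i j x y, Bi i x -> Bi j y -> Bi (i + j) (x * y)),
      (forall x, exists (s : seq int) (f : int -> B),
          [/\ uniq s, (forall i, Bi i (f i)) & x = \sum_(i <- s) f i]) &
      (forall (s : seq int) (f : int -> B), uniq s -> (forall i, Bi i (f i)) ->
          \sum_(i <- s) f i = 0 -> forall i, i \in s -> f i = 0)].

Definition homogeneous_ideal (Bi : int -> B -> Prop) (I : B -> Prop) : Prop :=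
  is_ideal I /\
  forall x, I x -> exists (s : seq int) (f : int -> B),
     [/\ uniq s, (forall i, Bi i (f i)), (forall i, I (f i)) & x = \sum_(i <- s) f i].

Definition strict_subset (P Q : B -> Prop) : Prop :=
  (forall x, P x -> Q x) /\ exists x, Q x /\ ~ P x.

Definition height_ge (P : B -> Prop) (n : nat) : Prop :=
  exists c : nat -> B -> Prop,
    [/\ (forall k, (k <= n)%N -> is_prime_ideal (c k)),
        (forall k, (k < n)%N -> strict_subset (c k) (c k.+1)) &
        (forall x, c n x <-> P x)].

Definition height_one (P : B -> Prop) : Prop :=
  is_prime_ideal P /\ height_ge P 1 /\ ~ height_ge P 2.

Definition is_gcd_set (S : int -> Prop) (g : nat) : Prop :=
  (forall i, S i -> (g%:Z %| i)%Z) /\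
  (forall c : int, (forall i, S i -> (c %| i)%Z) -> (c %| g%:Z)%Z).

Definition degree_support (Bi : int -> B -> Prop) (i : int) : Prop :=
  exists x, Bi i x /\ x <> 0.

(* degrees i with (B/P)_i <> 0, where (B/P)_i = image of B_i in B/P *)
Definition quot_degree_support (Bi : int -> B -> Prop) (P : B -> Prop) (i : int) : Prop :=
  exists x, Bi i x /\ ~ P x.

Definition e_eq1 (Bi : int -> B -> Prop) : Prop :=
  is_gcd_set (degree_support Bi) 1.

Definition Pi_set (Bi : int -> B -> Prop) (p : nat) : Prop :=
  prime p /\ exists P : B -> Prop,
    [/\ homogeneous_ideal Bi P, height_one P &
        exists g, is_gcd_set (quot_degree_support Bi P) g /\ (p %| g)%N].

Definition Pi_star (Bi : int -> B -> Prop) (d : nat) : Prop :=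
  (0 < d)%N /\ forall p, Pi_set Bi p -> ~ (p %| d)%N.

Definition veronese (Bi : int -> B -> Prop) (d : nat) (x : B) : Prop :=
  exists (s : seq int) (f : int -> B),
    [/\ uniq s, (forall i, Bi (i * d%:Z) (f i)) & x = \sum_(i <- s) f i].

Definition derivation (D : B -> B) : Prop :=
  (forall x y, D (x + y) = D x + D y) /\
  (forall x y, D (x * y) = x * D y + D x * y).

Definition locally_nilpotent (D : B -> B) : Prop :=
  forall x, exists n, iter n D x = 0.

(* a derivation of the subring A (given as a predicate), represented by a
   function B -> B whose values outside A are irrelevant *)
Definition derivation_on (A : B -> Prop) (delta : B -> B) : Prop :=
  [/\ (forall x, A x -> A (delta x)),
      (forall x y, A x -> A y -> delta (x + y) = delta x + delta y) &
      (forall x y, A x -> A y -> delta (x * y) = x * delta y + delta x * y)].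

Definition locally_nilpotent_on (A : B -> Prop) (delta : B -> B) : Prop :=
  forall x, A x -> exists n, iter n delta x = 0.

Definition extends_on (A : B -> Prop) (delta D : B -> B) : Prop :=
  forall x, A x -> D x = delta x.

End Defs.

From HB Require Import structures.
From mathcomp Require Import all_boot all_order all_algebra.
From mathcomp Require Import fraction zify ring.
From Stdlib Require Import ClassicalEpsilon FunctionalExtensionality Classical.
Set Implicit Arguments. Unset Strict Implicit. Unset Printing Implicit Defensive.
Import Order.TTheory GRing.Theory Num.Theory.
Local Open Scope ring_scope.

(* Let A = B^(d).  A derivation D of B extending delta is forced on a homogeneous h
   by d h^(d-1) D h = delta (h^d), since h^d lies in A; as d is a unit, D exists as
   soon as h^(d-1) divides delta (h^d) for every homogeneous h.  Otherwise some
   homogeneous component w of delta (h^d) has an associated prime P of h^(d-1) B; it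
   is homogeneous and, B being noetherian and normal, of height one.  Because d lies
   in Pi^*(B), the degrees of B/P generate Z/dZ, so there are homogeneous z1, z2 outside
   P with h z1 z2^(d-1) in A, and the Leibniz rule for the d-th power of this element
   shows that h^(d-1) divides z1^d (z2^d)^(d-1) w, which puts z1 or z2 in P.

   For local nilpotency let b be homogeneous and Y = b^d.  Then (d Y)^k D^k b is b
   times an element of A whose delta-degree grows more slowly in k than that of
   (d Y)^k; as the delta-degree is additive on A in characteristic zero, comparing
   d-th powers forces D^k b = 0 for large k. *)

Section UniqSums.
Variables (T : eqType) (V : nmodType).
Implicit Types (s t : seq T) (F : T -> V).

Lemma big_uniq_subset s t F : uniq s -> uniq t -> {subset s <= t} ->
  (forall i, i \notin s -> F i = 0) -> \sum_(i <- t) F i = \sum_(i <- s) F i.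
Proof.
move=> us ut sst F0; rewrite (bigID (mem s)) /= [X in _ + X]big1 ?addr0.
  rewrite -big_filter; apply/perm_big/uniq_perm; rewrite ?filter_uniq //.
  by move=> i; rewrite mem_filter andb_idr //; apply: sst.
by move=> i /F0.
Qed.

Lemma eq_big_uniq_support s t F : uniq s -> uniq t ->
  (forall i, i \notin s -> F i = 0) -> (forall i, i \notin t -> F i = 0) ->
  \sum_(i <- s) F i = \sum_(i <- t) F i.
Proof.
move=> us ut Fs Ft; have uU : uniq (undup (s ++ t)) by apply: undup_uniq.
rewrite -(big_uniq_subset us uU) ?(big_uniq_subset ut uU) // => i;
  by rewrite mem_undup mem_cat => ->; rewrite ?orbT.
Qed.

Lemma sum_if_eq_uniq s j (c : V) : uniq s ->
  \sum_(i <- s) (if i == j then c else 0) = if j \in s then c else 0.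
Proof.
move=> us; case: ifP => js.
  by rewrite (bigD1_seq j) //= eqxx big1 ?addr0 // => i /negbTE ->.
by rewrite big1_seq // => i /andP [_ ir]; case: eqP => // eij; rewrite -eij ir in js.
Qed.

End UniqSums.

(** * Homogeneous components *)

Section Grading.
Variables (B : idomainType) (Bi : int -> B -> Prop).
Hypothesis HG : Z_grading Bi.

Lemma hom0 i : Bi i 0.
Proof. by case: HG => [[H0 _] _ _ _ _]. Qed.

Lemma homB i x y : Bi i x -> Bi i y -> Bi i (x - y).
Proof. by case: HG => [[_ H] _ _ _ _]; apply: H. Qed.

Lemma homN i x : Bi i x -> Bi i (- x).
Proof. by move=> hx; rewrite -sub0r; apply: homB => //; apply: hom0. Qed.

Lemma homD i x y : Bi i x -> Bi i y -> Bi i (x + y).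
Proof. by move=> hx hy; rewrite -[y]opprK; apply/homB/homN. Qed.

Lemma homM i j x y : Bi i x -> Bi j y -> Bi (i + j) (x * y).
Proof. by case: HG => [_ _ H _ _]; apply: H. Qed.

Lemma hom1 : Bi 0 1.
Proof. by case: HG. Qed.

Lemma homX i x n : Bi i x -> Bi (i * n%:Z) (x ^+ n).
Proof.
move=> hx; elim: n => [|n IH]; first by rewrite mulr0 expr0; apply: hom1.
by rewrite exprS -addn1 PoszD mulrDr mulr1 addrC; apply: homM.
Qed.

Lemma hom_sum_eq0 (s : seq int) (f : int -> B) : uniq s -> (forall i, Bi i (f i)) ->
  \sum_(i <- s) f i = 0 -> forall i, i \in s -> f i = 0.
Proof. by case: HG => [_ _ _ _ H]; apply: H. Qed.

Definition hom_decomposition (x : B) (p : seq int * (int -> B)) : Prop :=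
  [/\ uniq p.1, (forall i, Bi i (p.2 i)) & x = \sum_(i <- p.1) p.2 i].

Definition hom_decomp (x : B) : seq int * (int -> B) :=
  epsilon (inhabits ([::], fun _ => 0)) (hom_decomposition x).

Definition hsupp (x : B) : seq int := (hom_decomp x).1.

(* The degree-i component of x, read off a decomposition chosen once and for all;
   by [hcompE] it does not depend on that choice. *)
Definition hcomp (i : int) (x : B) : B :=
  if i \in hsupp x then (hom_decomp x).2 i else 0.

Lemma hom_decompP x : hom_decomposition x (hom_decomp x).
Proof.
apply: epsilon_spec; case: HG => [_ _ _ H _].
by have [s [f [us hf ex]]] := H x; exists (s, f).
Qed.

Lemma hsupp_uniq x : uniq (hsupp x).
Proof. by case: (hom_decompP x). Qed.

Lemma hcomp_hom i x : Bi i (hcomp i x).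
Proof. by rewrite /hcomp; case: ifP => _; [case: (hom_decompP x) | apply: hom0]. Qed.

Lemma hcomp_out i x : i \notin hsupp x -> hcomp i x = 0.
Proof. by rewrite /hcomp => /negbTE ->. Qed.

Lemma hcomp_sum x : x = \sum_(i <- hsupp x) hcomp i x.
Proof.
case: (hom_decompP x) => _ _ {1}->.
by apply: eq_big_seq => i; rewrite /hcomp => ->.
Qed.

Lemma hcomp_sum_uniq x (t : seq int) : uniq t ->
  (forall i, i \notin t -> hcomp i x = 0) -> x = \sum_(i <- t) hcomp i x.
Proof.
move=> ut Ht; rewrite {1}(hcomp_sum x); apply: eq_big_uniq_support => //.
  exact: hsupp_uniq.
by move=> i /hcomp_out.
Qed.

Lemma hcompE (s : seq int) (f : int -> B) x : uniq s -> (forall i, Bi i (f i)) ->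
  x = \sum_(i <- s) f i -> forall i, hcomp i x = if i \in s then f i else 0.
Proof.
move=> us hf ex; set U := undup (s ++ hsupp x).
have uU : uniq U by apply: undup_uniq.
pose g i := (if i \in s then f i else 0) - hcomp i x.
have hg i : Bi i (g i).
  by apply: homB; [case: ifP => _; [apply: hf | apply: hom0] | apply: hcomp_hom].
have sg : \sum_(i <- U) g i = 0.
  rewrite big_split /= sumrN (@big_uniq_subset _ _ s) //; last first.
  - by move=> i /negbTE ->.
  - by move=> i; rewrite mem_undup mem_cat => ->.
  rewrite -(hcomp_sum_uniq uU); last first.
    by move=> i; rewrite mem_undup mem_cat negb_or => /andP [_ /hcomp_out].
  by rewrite ex (eq_big_seq f) ?subrr // => i ->.
move=> i; case: (boolP (i \in U)) => iU.
  by apply/eqP; rewrite eq_sym -subr_eq0; apply/eqP/(hom_sum_eq0 uU hg sg).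
by move: iU; rewrite mem_undup mem_cat negb_or => /andP [/negbTE -> /hcomp_out].
Qed.

Lemma hcomp_homE j h i : Bi j h -> hcomp i h = if i == j then h else 0.
Proof.
move=> hh; have hf k : Bi k (if k == j then h else 0).
  by case: eqP => [-> | _]; [apply: hh | apply: hom0].
rewrite (@hcompE [:: j] _ _ erefl hf) ?big_seq1 ?eqxx // inE.
by case: (i == j).
Qed.

Lemma hcomp_id j h : Bi j h -> hcomp j h = h.
Proof. by move=> hh; rewrite (hcomp_homE _ hh) eqxx. Qed.

Lemma hcomp0 i : hcomp i 0 = 0.
Proof. by rewrite (@hcomp_homE 0) ?if_same //; apply: hom0. Qed.

Lemma hcompD i x y : hcomp i (x + y) = hcomp i x + hcomp i y.
Proof.
set U := undup (hsupp x ++ hsupp y).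
have uU : uniq U by apply: undup_uniq.
have out k : k \notin U -> hcomp k x = 0 /\ hcomp k y = 0.
  by rewrite mem_undup mem_cat negb_or => /andP [/hcomp_out -> /hcomp_out ->].
rewrite (@hcompE U (fun k => hcomp k x + hcomp k y) (x + y) uU) //.
- by case: ifP => // /negbT /out [-> ->]; rewrite addr0.
- by move=> k; apply/homD/hcomp_hom/hcomp_hom.
- by rewrite big_split -!hcomp_sum_uniq // => k /out [].
Qed.

Lemma hcompN i x : hcomp i (- x) = - hcomp i x.
Proof. by apply/eqP; rewrite -subr_eq0 opprK addrC -hcompD subrr hcomp0. Qed.

Lemma hcompB i x y : hcomp i (x - y) = hcomp i x - hcomp i y.
Proof. by rewrite hcompD hcompN. Qed.

Lemma hcomp_big i (I : Type) (r : seq I) (F : I -> B) :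
  hcomp i (\sum_(k <- r) F k) = \sum_(k <- r) hcomp i (F k).
Proof. by apply: big_morph; [apply: hcompD | apply: hcomp0]. Qed.

Lemma hcompMh j h y k : Bi j h -> hcomp k (h * y) = h * hcomp (k - j) y.
Proof.
move=> hh; pose g k := h * hcomp (k - j) y.
have um : uniq (map (+%R^~ j) (hsupp y)).
  by rewrite map_inj_uniq ?hsupp_uniq // => a b /addIr.
rewrite (@hcompE _ g (h * y) um).
- case: ifP => // /negbT kn; rewrite /g hcomp_out ?mulr0 //.
  by apply: contra kn => kin; apply/mapP; exists (k - j); rewrite ?subrK.
- by move=> i; rewrite /g -[X in Bi X](subrKC j); apply/homM/hcomp_hom.
- by rewrite big_map /g {1}(hcomp_sum y) mulr_sumr; apply: eq_bigr => i _; rewrite addrK.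
Qed.

Lemma hcomp_eq0 x : (forall i, hcomp i x = 0) -> x = 0.
Proof. by move=> H; rewrite (hcomp_sum x) big1. Qed.

End Grading.

(** * Subrings, the Veronese subring and derivations on them *)

Definition is_subring (R : pzRingType) (S : R -> Prop) : Prop :=
  [/\ S 1, (forall x y, S x -> S y -> S (x - y)) & (forall x y, S x -> S y -> S (x * y))].

Section Subring.
Variables (R : pzRingType) (S : R -> Prop).
Hypothesis HS : is_subring S.

Lemma subring1 : S 1. Proof. by case: HS. Qed.

Lemma subringB x y : S x -> S y -> S (x - y). Proof. by case: HS => _ H _; apply: H. Qed.

Lemma subringM x y : S x -> S y -> S (x * y). Proof. by case: HS => _ _ H; apply: H. Qed.

Lemma subring0 : S 0. Proof. by rewrite -(subrr 1); apply/subringB/subring1/subring1. Qed.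

Lemma subringN x : S x -> S (- x). Proof. by rewrite -sub0r; apply/subringB/subring0. Qed.

Lemma subringD x y : S x -> S y -> S (x + y).
Proof. by move=> Sx Sy; rewrite -[y]opprK; apply/subringB/subringN. Qed.

Lemma subring_nat n : S n%:R.
Proof.
elim: n => [|n IH]; first exact: subring0.
by rewrite -addn1 natrD; apply/subringD/subring1.
Qed.

Lemma subringX x n : S x -> S (x ^+ n).
Proof.
move=> Sx; elim: n => [|n IH]; first by rewrite expr0; apply: subring1.
by rewrite exprS; apply: subringM.
Qed.

Lemma subring_sum (I : Type) (r : seq I) (F : I -> R) :
  (forall k, S (F k)) -> S (\sum_(k <- r) F k).
Proof.
move=> SF; elim: r => [|a r IH]; first by rewrite big_nil; apply: subring0.
by rewrite big_cons; apply: subringD.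
Qed.

End Subring.

Lemma is_subringT (R : pzRingType) : is_subring (fun _ : R => True).
Proof. by []. Qed.

Section Veronese.
Variables (B : idomainType) (Bi : int -> B -> Prop).
Hypothesis HG : Z_grading Bi.
Variable d : nat.
Local Notation A := (veronese Bi d).

Lemma veroneseP x : A x <-> forall j, ~~ (d%:Z %| j)%Z -> hcomp Bi j x = 0.
Proof.
split.
  case=> s [f [us hf ->]] j nd; rewrite hcomp_big //; apply: big1 => i _.
  rewrite (hcomp_homE HG _ (hf i)); case: eqP => // ej.
  by case/negP: nd; rewrite ej dvdz_mull.
move=> H; set L := [seq j <- hsupp Bi x | (d%:Z %| j)%Z].
exists (map (fun j => (j %/ d%:Z)%Z) L), (fun i => hcomp Bi (i * d%:Z) x); split.
- rewrite map_inj_in_uniq ?filter_uniq ?hsupp_uniq // => a b.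
  by rewrite !mem_filter => /andP [da _] /andP [db _] e; rewrite -(divzK da) -(divzK db) e.
- by move=> i; apply: hcomp_hom.
- rewrite big_map (eq_big_seq (hcomp Bi ^~ x)); last first.
    by move=> j; rewrite mem_filter => /andP [dj _]; rewrite divzK.
  rewrite big_filter big_mkcond /= {1}(hcomp_sum HG x).
  by apply: eq_bigr => j _; case: ifP => // /negbT /H.
Qed.

Lemma veronese_hom j h : Bi j h -> (d%:Z %| j)%Z -> A h.
Proof.
move=> hh dj; apply/veroneseP => k nd; rewrite (hcomp_homE HG _ hh).
by case: eqP => // ekj; rewrite ekj dj in nd.
Qed.

Lemma veronese_hom_exp i x : Bi i x -> A (x ^+ d).
Proof. by move=> hx; apply: (veronese_hom (homX HG d hx)); rewrite dvdz_mull. Qed.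

Lemma veronese_subring : is_subring A.
Proof.
split.
- by apply: (veronese_hom (hom1 HG)); rewrite dvdz0.
- move=> x y /veroneseP Hx /veroneseP Hy; apply/veroneseP => j nd.
  by rewrite hcompB // Hx // Hy // subr0.
- move=> x y /veroneseP Hx /veroneseP Hy; apply/veroneseP => j nd.
  rewrite (hcomp_sum HG x) mulr_suml hcomp_big //; apply: big1 => i _.
  rewrite (hcompMh HG _ _ (hcomp_hom HG i x)).
  have [di|ndi] := boolP (d%:Z %| i)%Z; last by rewrite Hx // mul0r.
  rewrite Hy ?mulr0 //; apply: contra nd => dji.
  by rewrite -(subrK i j) rpredD.
Qed.

(* The part z1 of z in degrees not divisible by d satisfies: a z1 is in A, yet
   all its components have degrees not divisible by d, so a z1 = 0. *)
Lemma veronese_cancel a z : A a -> a != 0 -> A (a * z) -> A z.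
Proof.
move=> Aa a0 Aaz; pose off j := ~~ (d%:Z %| j)%Z.
set z1 := \sum_(j <- hsupp Bi z | off j) hcomp Bi j z.
have z1E j : hcomp Bi j z1 = if off j then hcomp Bi j z else 0.
  rewrite /z1 big_mkcond hcomp_big // (eq_bigr (fun i =>
    if i == j then (if off j then hcomp Bi j z else 0) else 0)); last first.
    move=> i _; rewrite (fun_if (hcomp Bi j)) (hcomp0 HG).
    rewrite (hcomp_homE HG j (hcomp_hom HG i z)) eq_sym.
    by case: eqP => [->|_]; case: ifP.
  rewrite sum_if_eq_uniq ?hsupp_uniq //.
  by case: ifP => // /negbT /hcomp_out ->; rewrite if_same.
have Az0 : A (z - z1) by apply/veroneseP => j nd; rewrite hcompB // z1E /off nd subrr.
have Aaz1 : A (a * z1).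
  rewrite -[z1](subKr z) mulrBr.
  by apply: subringB veronese_subring _ _ Aaz (subringM veronese_subring Aa Az0).
have : a * z1 = 0.
  apply: (hcomp_eq0 HG) => j; have [dj|ndj] := boolP (d%:Z %| j)%Z; last first.
    by move/veroneseP: Aaz1; apply.
  rewrite (hcomp_sum HG a) mulr_suml hcomp_big //; apply: big1 => i _.
  rewrite (hcompMh HG _ _ (hcomp_hom HG i a)) z1E /off.
  have [di|ndi] := boolP (d%:Z %| i)%Z; last by move/veroneseP: Aa => ->; rewrite ?mul0r.
  by rewrite rpredB ?mulr0.
move/eqP; rewrite mulf_eq0 (negbTE a0) /= => /eqP z10.
by rewrite -(subr0 z) -z10.
Qed.

End Veronese.

Section DerivationOn.
Variables (B : idomainType) (S : B -> Prop) (delta : B -> B).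
Hypotheses (HS : is_subring S) (Hd : derivation_on S delta).

Lemma der_in x : S x -> S (delta x). Proof. by case: Hd => H _ _; apply: H. Qed.

Lemma derD x y : S x -> S y -> delta (x + y) = delta x + delta y.
Proof. by case: Hd => _ H _; apply: H. Qed.

Lemma derM x y : S x -> S y -> delta (x * y) = x * delta y + delta x * y.
Proof. by case: Hd => _ _ H; apply: H. Qed.

Lemma der0 : delta 0 = 0.
Proof.
have S0 := subring0 HS.
by apply: (addrI (delta 0)); rewrite -derD // !addr0.
Qed.

Lemma derN x : S x -> delta (- x) = - delta x.
Proof.
move=> Sx; apply/eqP; rewrite -subr_eq0 opprK -derD ?addNr ?der0 //.
exact: subringN.
Qed.

Lemma derB x y : S x -> S y -> delta (x - y) = delta x - delta y.
Proof. by move=> Sx Sy; rewrite derD ?derN //; apply: subringN. Qed.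

Lemma der_sum (I : Type) (r : seq I) (F : I -> B) :
  (forall k, S (F k)) -> delta (\sum_(k <- r) F k) = \sum_(k <- r) delta (F k).
Proof.
move=> SF; elim: r => [|a r IH]; first by rewrite !big_nil der0.
by rewrite !big_cons derD ?IH //; apply: subring_sum.
Qed.

Lemma der1 : delta 1 = 0.
Proof.
have S1 := subring1 HS.
have := derM S1 S1; rewrite !mulr1 mul1r => dM1.
by apply: (addrI (delta 1)); rewrite -dM1 addr0.
Qed.

Lemma der_nat n : delta n%:R = 0.
Proof.
elim: n => [|n IH]; first exact: der0.
rewrite -addn1 natrD derD ?IH ?der1 ?addr0 //; first exact: subring_nat.
exact: subring1.
Qed.

Lemma derX x n : S x -> delta (x ^+ n.+1) = n.+1%:R * x ^+ n * delta x.
Proof.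
move=> Sx; elim: n => [|n IH]; first by rewrite expr1 expr0 mulr1 mul1r.
rewrite exprS derM ?IH //; last exact: subringX.
by rewrite !exprS; ring.
Qed.

End DerivationOn.

Lemma derivation_onT (B : idomainType) (D : B -> B) :
  derivation D -> derivation_on (fun _ => True) D.
Proof. by case=> DD DM; split=> // x y _ _. Qed.

(** * Ideals of a noetherian normal domain *)

Section Ideals.
Variable B : idomainType.
Implicit Types (I : B -> Prop) (x y : B).

Definition dvdr (s y : B) : Prop := exists t, y = s * t.

Lemma dvdr_sum s (J : Type) (r : seq J) (F : J -> B) :
  (forall k, dvdr s (F k)) -> dvdr s (\sum_(k <- r) F k).
Proof.
move=> H; elim: r => [|a r [t2 IH]]; first by exists 0; rewrite big_nil mulr0.
by have [t1 Ht1] := H a; exists (t1 + t2); rewrite big_cons Ht1 IH mulrDr.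
Qed.

Section Ideal.
Variable I : B -> Prop.
Hypothesis HI : is_ideal I.

Lemma ideal0 : I 0. Proof. by case: HI. Qed.

Lemma idealB x y : I x -> I y -> I (x - y). Proof. by case: HI => _ H _; apply: H. Qed.

Lemma ideal_mull a x : I x -> I (a * x). Proof. by case: HI => _ _ H; apply: H. Qed.

Lemma ideal_mulr a x : I x -> I (x * a). Proof. by rewrite mulrC; apply: ideal_mull. Qed.

Lemma idealN x : I x -> I (- x). Proof. by rewrite -sub0r; apply/idealB/ideal0. Qed.

Lemma idealD x y : I x -> I y -> I (x + y).
Proof. by move=> Ix Iy; rewrite -[y]opprK; apply/idealB/idealN. Qed.

Lemma ideal_sum (J : Type) (r : seq J) (F : J -> B) :
  (forall k, I (F k)) -> I (\sum_(k <- r) F k).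
Proof.
move=> IF; elim: r => [|a r IH]; first by rewrite big_nil; apply: ideal0.
by rewrite big_cons; apply: idealD.
Qed.

End Ideal.

Lemma prime_idealX (P : B -> Prop) z n : is_prime_ideal P -> P (z ^+ n) -> P z.
Proof.
case=> _ P1 Pprime; elim: n => [|n IH]; first by rewrite expr0.
by rewrite exprS => /Pprime [].
Qed.

Lemma noetherian_gens I : noetherian B -> is_ideal I ->
  exists g : seq B, (forall k, (k < size g)%N -> I g`_k) /\
    forall x, I x -> exists c : seq B, x = \sum_(i < size g) c`_i * g`_i.
Proof.
move=> HN HI; have [g Hg] := HN I HI; exists g; split; last first.
  by move=> x /Hg [c [_ ->]]; exists c.
move=> k kg; apply/Hg; exists [seq (i == k)%:R | i <- iota 0 (size g)].
rewrite size_map size_iota; split => //.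
rewrite (bigD1 (Ordinal kg)) //= big1 ?addr0 => [|i /eqP ne].
  by rewrite (nth_map 0) ?size_iota // nth_iota // eqxx mul1r.
rewrite (nth_map 0) ?size_iota // nth_iota // add0n.
by case: eqP => [ik|]; [case: ne; apply: val_inj | rewrite mul0r].
Qed.

Lemma noetherian_chain (c : nat -> B -> Prop) : noetherian B ->
  (forall n, is_ideal (c n)) -> (forall n x, c n x -> c n.+1 x) ->
  exists N, forall n x, c n x -> c N x.
Proof.
move=> HN Hc cS.
have mono n m x : (n <= m)%N -> c n x -> c m x.
  by move=> /subnK <-; elim: (m - n)%N => // k IH /IH /cS.
pose U x := exists n, c n x.
have UI : is_ideal U.
  split; first by exists 0%N; apply: ideal0 (Hc 0%N).
  - move=> x y [n Hx] [m Hy]; exists (maxn n m).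
    by apply: (idealB (Hc _)); [apply: mono Hx | apply: mono Hy]; rewrite ?leq_maxl ?leq_maxr.
  - by move=> a x [n Hx]; exists n; apply: ideal_mull (Hc n) _ _ Hx.
have [g [gU Hg]] := noetherian_gens HN UI.
have [N HN'] : exists N, forall k, (k < size g)%N -> c N g`_k.
  elim: (size g) gU => [|m IH] gU; first by exists 0%N.
  have [N HN'] := IH (fun k km => gU k (ltnW km)).
  have [n Hn] := gU m (ltnSn m).
  exists (maxn N n) => k; rewrite ltnS leq_eqVlt => /orP [/eqP -> |].
    by apply: mono Hn; apply: leq_maxr.
  by move=> km; apply: mono (HN' k km); apply: leq_maxl.
exists N => n x cnx; have [a ->] := Hg x (ex_intro _ n cnx).
by apply: (ideal_sum (Hc N)) => i; apply/(ideal_mull (Hc N))/HN'.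
Qed.

Lemma noetherian_max (T : Type) (I : T -> B -> Prop) (Q : T -> Prop) :
  noetherian B -> (forall t, Q t -> is_ideal (I t)) -> (exists t, Q t) ->
  exists t0, Q t0 /\ forall t, Q t -> (forall x, I t0 x -> I t x) ->
    forall x, I t x -> I t0 x.
Proof.
move=> HN HI [t1 Qt1]; apply: NNPP => Hno.
pose bigger t0 t := [/\ Q t, forall x, I t0 x -> I t x & exists x, I t x /\ ~ I t0 x].
have step t0 : Q t0 -> exists t, bigger t0 t.
  move=> Qt0; apply: NNPP => nt; apply: Hno; exists t0; split => // t Qt sub x Itx.
  by apply: NNPP => nx; apply: nt; exists t; split => //; exists x.
pose next t0 := epsilon (inhabits t1) (bigger t0).
have nextP t0 : Q t0 -> bigger t0 (next t0) by move/step; apply: epsilon_spec.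
pose c n := iter n next t1.
have Qc n : Q (c n) by elim: n => [|n IH] //=; case: (nextP _ IH).
have [N cN] : exists N, forall n x, I (c n) x -> I (c N) x.
  apply: noetherian_chain => // n; first exact: HI.
  by case: (nextP _ (Qc n)).
by case: (nextP _ (Qc N)) => _ _ [x [Ix nIx]]; apply/nIx/(cN N.+1).
Qed.

(* Determinant trick: c / s is an eigenvalue of a matrix over B acting on the
   generators of I, hence integral over B, hence in B by normality. *)
Lemma normal_dvdr_of_ideal_stable I s c :
  noetherian B -> normal_domain B -> is_ideal I ->
  (exists q, I q /\ q != 0) -> s != 0 ->
  (forall q, I q -> exists q', I q' /\ c * q = s * q') -> dvdr s c.
Proof.
move=> HN Hnorm HI [q [Iq q0]] s0 Hc.
have [g [gI Hg]] := noetherian_gens HN HI; set n := size g in gI Hg.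
have exM (k : 'I_n) : exists a : seq B, c * g`_k = s * \sum_(i < n) a`_i * g`_i.
  have [q' [Iq' ->]] := Hc _ (gI k (ltn_ord k)).
  by have [a ->] := Hg q' Iq'; exists a.
have [M HM] := fin_all_exists exM.
pose F := {fraction B}; pose u : F := tofrac c / tofrac s.
pose G : 'rV[F]_n := \row_i tofrac g`_i.
pose Mf : 'M[F]_n := \matrix_(i, k) tofrac (M k)`_i.
have eigen : eigenvalue Mf u.
  apply/eigenvalueP; exists G.
    apply/rowP => k; rewrite !mxE /u mulrAC -tofracM HM tofracM.
    rewrite [tofrac s * _]mulrC mulfK ?tofrac_eq0 // rmorph_sum.
    by apply: eq_bigr => i _; rewrite !mxE rmorphM mulrC.
  apply: contraNneq q0 => G0; have [a ->] := Hg q Iq.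
  rewrite big1 // => i _; move/rowP/(_ i): G0.
  by rewrite !mxE => /eqP; rewrite tofrac_eq0 => /eqP ->; rewrite mulr0.
have [b ub] : exists b, u = tofrac b.
  apply: Hnorm; exists (char_poly (\matrix_(i, k) (M k)`_i)).
  split; first exact: char_poly_monic.
  rewrite map_char_poly -eigenvalue_root_char.
  by congr (eigenvalue _ u): eigen; apply/matrixP => i k; rewrite !mxE.
exists b; apply/eqP; rewrite -tofrac_eq tofracM -ub /u mulrC mulfVK //.
by rewrite tofrac_eq0.
Qed.

End Ideals.

Lemma seq_max_exists (disp : Order.disp_t) (T : orderType disp) (s : seq T) :
  s != [::] -> exists2 m, m \in s & forall i, i \in s -> (i <= m)%O.
Proof.
elim: s => [//|a [|b s] IH] _.
  by exists a => [|i]; rewrite ?mem_seq1 // => /eqP ->.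
have [m ms Hm] := IH isT; case: (leP a m) => am.
  by exists m => [|i]; rewrite inE ?ms ?orbT // => /orP [/eqP -> | /Hm].
exists a => [|i]; rewrite inE ?eqxx // => /orP [/eqP -> // | /Hm im].
exact: le_trans im (ltW am).
Qed.

Definition classicb (P : Prop) : bool := if excluded_middle_informative P then true else false.

Lemma classicbP (P : Prop) : reflect P (classicb P).
Proof. by rewrite /classicb; case: excluded_middle_informative => h; constructor. Qed.

Section HomogeneousPrime.
Variables (B : idomainType) (Bi : int -> B -> Prop).
Hypothesis HG : Z_grading Bi.
Local Notation hcomp := (hcomp Bi).

Lemma ideal_outside_hcomps (P : B -> Prop) z : is_ideal P -> ~ P z ->
  exists2 S : seq int, [/\ uniq S, S != [::] & forall i, i \in S -> ~ P (hcomp i z)] &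
     P (z - \sum_(i <- S) hcomp i z).
Proof.
move=> HI nz; set S := [seq i <- hsupp Bi z | ~~ classicb (P (hcomp i z))].
have PS : P (z - \sum_(i <- S) hcomp i z).
  rewrite {1}(hcomp_sum HG z) (bigID (fun i => classicb (P (hcomp i z)))) /=.
  rewrite big_filter addrK big_mkcond; apply: ideal_sum => // i.
  by case: classicbP => // _; apply: ideal0.
exists S => //; split.
- by rewrite filter_uniq // hsupp_uniq.
- by apply: contra_notN nz => /eqP S0; rewrite S0 big_nil subr0 in PS.
- by move=> i; rewrite mem_filter => /andP [/classicbP].
Qed.

(* Discard from x and y their components lying in P; the top components of what
   is left multiply to the top component of an element of P. *)
Lemma homogeneous_prime (P : B -> Prop) :
  is_ideal P -> (forall x k, P x -> P (hcomp k x)) ->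
  (forall a b i j, Bi i a -> Bi j b -> P (a * b) -> P a \/ P b) ->
  forall x y, P (x * y) -> P x \/ P y.
Proof.
move=> HI Phcomp Phprime x y Pxy; apply: NNPP => /not_or_and [nPx nPy].
have [Sx [ux /seq_max_exists [m mS Hm] Hx] Px] := ideal_outside_hcomps HI nPx.
have [Sy [uy /seq_max_exists [n nS Hn] Hy] Py] := ideal_outside_hcomps HI nPy.
set x' := \sum_(i <- Sx) hcomp i x; set y' := \sum_(i <- Sy) hcomp i y.
have Pxy' : P (x' * y').
  have -> : x' * y' = x * y - (x - x') * y - x' * (y - y') by ring.
  by apply: (idealB HI (idealB HI Pxy (ideal_mulr HI _ Px)) (ideal_mull HI _ Py)).
suff top : hcomp (m + n) (x' * y') = hcomp m x * hcomp n y.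
  have := Phcomp _ (m + n) Pxy'; rewrite top.
  by case/(Phprime _ _ _ _ (hcomp_hom HG m x) (hcomp_hom HG n y)); [apply: Hx | apply: Hy].
rewrite /x' /y' mulr_suml hcomp_big // (eq_big_seq
  (fun i => if i == m then hcomp m x * hcomp n y else 0)) ?sum_if_eq_uniq ?mS //.
move=> i iS; rewrite mulr_sumr hcomp_big // (eq_big_seq (fun j =>
  if i == m then (if j == n then hcomp m x * hcomp n y else 0) else 0)).
  by case: eqP => _; rewrite ?sum_if_eq_uniq ?nS ?big1.
move=> j jS; rewrite (hcomp_homE HG _ (homM HG (hcomp_hom HG i x) (hcomp_hom HG j y))).
have -> : (m + n == i + j) = (i == m) && (j == n).
  have := Hm _ iS; have := Hn _ jS => jn im.
  by apply/eqP/andP => [e | [/eqP -> /eqP ->]] //; split; apply/eqP; lia.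
by case: eqP => [->|]; case: eqP => [->|].
Qed.

End HomogeneousPrime.

(** * Homogeneous associated primes of height one *)

Section Annihilator.
Variables (B : idomainType) (Bi : int -> B -> Prop).
Hypothesis HG : Z_grading Bi.

Definition ann (s c : B) : B -> Prop := fun x => dvdr s (x * c).

Lemma ann_ideal s c : is_ideal (ann s c).
Proof.
split; first by exists 0; rewrite mul0r mulr0.
- by move=> x y [t1 e1] [t2 e2]; exists (t1 - t2); rewrite mulrBl e1 e2 mulrBr.
- by move=> a x [t e]; exists (a * t); rewrite -mulrA e mulrCA.
Qed.

Lemma ann_hcomp s c js kc x k :
  Bi js s -> Bi kc c -> ann s c x -> ann s c (hcomp Bi k x).
Proof.
move=> hs hc [t e]; exists (hcomp Bi (k + kc - js) t).
rewrite mulrC -(addrK kc k) -(hcompMh HG _ _ hc) mulrC e.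
by rewrite (hcompMh HG _ _ hs) addrK.
Qed.

Lemma ann_maximal_prime s c js kc : Bi js s -> Bi kc c -> ~ dvdr s c ->
  (forall a i, Bi i a -> ~ dvdr s (a * c) ->
     (forall x, ann s c x -> ann s (a * c) x) -> forall x, ann s (a * c) x -> ann s c x) ->
  is_prime_ideal (ann s c).
Proof.
move=> hs hc nsc cmax; have HI := ann_ideal s c.
split=> //; first by rewrite /ann mul1r.
apply: (homogeneous_prime HG HI) => [x k|a b i j ha hb Pab]; first exact: ann_hcomp hs hc.
apply: NNPP => /not_or_and [nPa nPb]; apply: nPb; apply: (cmax a i) => //.
- by move=> x [t e]; exists (a * t); rewrite mulrCA e mulrCA.
- by case: Pab => t e; exists t; rewrite mulrCA mulrA e.
Qed.

Lemma zero_prime_ideal : is_prime_ideal (fun x : B => x = 0).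
Proof.
split; first split => //.
- by move=> x y -> ->; rewrite subr0.
- by move=> a x ->; rewrite mulr0.
- by move/eqP; rewrite oner_eq0.
- by move=> x y /eqP; rewrite mulf_eq0 => /orP [] /eqP; [left | right].
Qed.

Hypotheses (HN : noetherian B) (Hnorm : normal_domain B).

(* Given a prime Q with 0 < Q < P, either c P is contained in s P, or some p0 in P
   with c p0 = s t0 and t0 outside P lies outside Q and gives c Q inside s Q; in
   both cases the determinant trick yields s | c. *)
Lemma ann_prime_height_one s c : s != 0 -> ~ dvdr s c ->
  is_prime_ideal (ann s c) -> height_one (ann s c).
Proof.
move=> s0 nsc Pprime; set P := ann s c.
have Ps : P s by exists c.
split=> //; split.
  exists (fun k => if k == 0%N then (fun x : B => x = 0) else P); split=> //.
  - by move=> [|k] _ //=; apply: zero_prime_ideal.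
  - move=> [|//] _ /=; split; last by exists s; split=> //; apply/eqP.
    by move=> x ->; apply: ideal0 (ann_ideal s c).
case=> ch [chprime chsub chtop]; set Q := ch 1%N.
have [[QI _ Qprime] QP] : is_prime_ideal Q /\ forall x, Q x -> P x.
  by split; [apply: chprime | move=> x /(chsub 1%N isT).1 /chtop].
have [p [Pp nQp]] : exists p, P p /\ ~ Q p.
  by have [_ [p [/chtop ? ?]]] := chsub 1%N isT; exists p.
have [q [Qq q0]] : exists q, Q q /\ q != 0.
  have [_ [q [Qq nq]]] := chsub 0%N isT; exists q; split=> //.
  by apply: contra_notN nq => /eqP ->; case: (chprime 0%N isT) => -[].
have cross p0 t0 p' tp : p0 * c = s * t0 -> p' * c = s * tp -> p' * t0 = p0 * tp.
  move=> e0 ep; apply: (mulfI s0).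
  by rewrite mulrCA -e0 mulrCA ep mulrCA.
have [stable|[p0 [Pp0 np0]]] :
    (forall p, P p -> exists p', P p' /\ c * p = s * p') \/
    exists p0, P p0 /\ ~ exists p', P p' /\ c * p0 = s * p'.
- apply: NNPP => /not_or_and [H1 H2]; apply: H1 => p1 Pp1.
  by apply: NNPP => H; apply: H2; exists p1.
- by apply: nsc; apply: (normal_dvdr_of_ideal_stable HN Hnorm (ann_ideal s c));
    first by exists s.
have [t0 e0] := Pp0.
have nPt0 : ~ P t0 by move=> Pt0; apply: np0; exists t0; rewrite mulrC.
have nQp0 : ~ Q p0.
  move=> Qp0; have [tp ep] := Pp; have /Qprime [/nQp|/QP/nPt0] // : Q (p * t0).
  by rewrite (cross p0 t0 p tp) //; apply: ideal_mulr.
apply: nsc; apply: (normal_dvdr_of_ideal_stable HN Hnorm QI) => [|//|q1 Qq1].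
  by exists q.
have [t1 e1] := QP _ Qq1; exists t1; split; last by rewrite mulrC.
have /Qprime [/nQp0|] // : Q (p0 * t1).
by rewrite -(cross p0 t0 q1 t1) //; apply: (ideal_mulr QI).
Qed.

(* P is an annihilator (sB : r w), maximal among those with r homogeneous and
   r w outside sB. *)
Lemma homogeneous_height_one_ann s w js kw : Bi js s -> s != 0 -> Bi kw w -> ~ dvdr s w ->
  exists P : B -> Prop,
    [/\ homogeneous_ideal Bi P, height_one P & forall a, dvdr s (a * w) -> P a].
Proof.
move=> hs s0 hw nsw.
pose Q r := (exists j, Bi j r) /\ ~ dvdr s (r * w).
have [r0 [[[j0 hr0] nr0] rmax]] : exists r0, Q r0 /\ forall r, Q r ->
    (forall x, ann s (r0 * w) x -> ann s (r * w) x) ->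
    forall x, ann s (r * w) x -> ann s (r0 * w) x.
  apply: noetherian_max => //; first by move=> r _; apply: ann_ideal.
  by exists 1; split; [exists 0; apply: hom1 | rewrite mul1r].
have hc := homM HG hr0 hw.
have Pprime : is_prime_ideal (ann s (r0 * w)).
  apply: ann_maximal_prime hs hc nr0 _ => a i ha; rewrite mulrA => nsa sub.
  by apply: rmax => //; split; [exists (i + j0); apply: homM | ].
exists (ann s (r0 * w)); split.
- split; first exact: ann_ideal.
  move=> x Px; exists (hsupp Bi x), (hcomp Bi ^~ x); split.
  + exact: hsupp_uniq.
  + by move=> i; apply: hcomp_hom.
  + by move=> i; apply: ann_hcomp hs hc Px.
  + exact: hcomp_sum.
- exact: ann_prime_height_one.
- by move=> a [t e]; exists (r0 * t); rewrite mulrCA e mulrCA.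
Qed.

End Annihilator.

(** * Degrees modulo a homogeneous prime *)

Section IntSubgroup.
Variable D : int -> Prop.
Hypotheses (D0 : D 0) (DB : forall a b, D a -> D b -> D (a - b)).

Lemma int_subgroupN a : D a -> D (- a).
Proof. by rewrite -sub0r; apply: DB. Qed.

Lemma int_subgroupMz a z : D a -> D (a * z).
Proof.
move=> Da; have DMn (n : nat) : D (a * n%:Z).
  elim: n => [|n IH]; first by rewrite mulr0.
  by rewrite -addn1 PoszD mulrDr mulr1 -[X in _ + X]opprK; apply/DB/int_subgroupN.
case: z => n; first exact: DMn.
by rewrite NegzE mulrN; apply/int_subgroupN/DMn.
Qed.

Lemma int_subgroup_gen : exists g : nat, D g%:Z /\ forall k, D k -> (g%:Z %| k)%Z.
Proof.
have Dabs k : D k -> D `|k|%N.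
  by case: (ger0P k) => k0 Dk; [rewrite gez0_abs | rewrite ltz0_abs //; apply: int_subgroupN].
case: (classic (exists n, (0 < n)%N && classicb (D n%:Z))) => [ex|none]; last first.
  exists 0%N; split=> // k Dk; rewrite dvd0z; apply/eqP; apply: NNPP => k0; apply: none.
  by exists `|k|%N; rewrite absz_gt0; apply/andP; split; [apply/eqP | apply/classicbP/Dabs].
case: (ex_minnP ex) => g /andP [g0 /classicbP Dg] gmin.
exists g; split=> // k Dk; apply/dvdz_mod0P; apply: NNPP => r0.
have g0' : g%:Z != 0 by rewrite eqz_nat -lt0n.
have Dr : D (k %% g%:Z)%Z.
  have -> : (k %% g%:Z)%Z = k - (k %/ g%:Z)%Z * g%:Z.
    by rewrite {2}(divz_eq k g%:Z) addrAC subrr add0r.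
  by apply: DB Dk _; rewrite mulrC; apply: int_subgroupMz.
have rE : `|(k %% g%:Z)%Z|%N = (k %% g%:Z)%Z :> int by apply/gez0_abs/modz_ge0.
have : (g <= `|(k %% g%:Z)%Z|)%N.
  apply: gmin; rewrite absz_gt0; apply/andP; split; first exact/eqP.
  by apply/classicbP; rewrite rE.
by have := ltz_mod k g0'; lia.
Qed.

End IntSubgroup.

Section QuotientDegrees.
Variables (B : idomainType) (Bi : int -> B -> Prop).
Hypothesis HG : Z_grading Bi.

Lemma quot_degree_gcd (P : B -> Prop) : is_prime_ideal P ->
  exists g : nat, is_gcd_set (quot_degree_support Bi P) g /\
    forall z, exists a b, [/\ quot_degree_support Bi P a,
                              quot_degree_support Bi P b & g%:Z * z = a - b].
Proof.
case=> _ P1 Pprime; set S := quot_degree_support Bi P.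
have S0 : S 0 by exists 1; split=> //; apply: hom1.
have SD a b : S a -> S b -> S (a + b).
  by move=> [x [hx nx]] [y [hy ny]]; exists (x * y); split; [apply: homM | case/Pprime].
pose D k := exists a b, [/\ S a, S b & k = a - b].
have D0 : D 0 by exists 0, 0; rewrite subr0.
have DB a b : D a -> D b -> D (a - b).
  move=> [a1 [a2 [Sa1 Sa2 ->]]] [b1 [b2 [Sb1 Sb2 ->]]].
  by exists (a1 + b2), (a2 + b1); split; [apply: SD | apply: SD | ring].
have [g [Dg gD]] := int_subgroup_gen D0 DB.
exists g; split; last first.
  by move=> z; have [a [b [Sa Sb ->]]] := int_subgroupMz D0 DB z Dg; exists a, b.
split=> [k Sk|c cS]; first by apply: gD; exists k, 0; rewrite subr0.
by case: Dg => a [b [Sa Sb ->]]; rewrite rpredB ?cS.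
Qed.

Lemma Pi_star_coprime d (P : B -> Prop) g : Pi_star Bi d ->
  homogeneous_ideal Bi P -> height_one P ->
  is_gcd_set (quot_degree_support Bi P) g -> coprime g d.
Proof.
move=> [d0 dPi] Phom Pone gS; apply: contraT => ngd.
have gd1 : (1 < gcdn g d)%N by rewrite ltn_neqAle eq_sym ngd gcdn_gt0 d0 orbT.
exfalso; apply: (dPi _ _ (dvdn_trans (pdiv_dvd _) (dvdn_gcdr g d))).
split; first exact: pdiv_prime.
exists P; split=> //; exists g; split=> //.
exact: dvdn_trans (pdiv_dvd _) (dvdn_gcdl _ _).
Qed.

Lemma quot_degree_residue d (P : B -> Prop) i : Pi_star Bi d ->
  homogeneous_ideal Bi P -> height_one P ->
  exists z1 z2 j1 j2, [/\ Bi j1 z1, Bi j2 z2, ~ P z1, ~ P z2 &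
     (d%:Z %| i + (j1 - j2))%Z].
Proof.
move=> dPi Phom Pone; have [g [gS gmul]] := quot_degree_gcd Pone.1.
have /eqP cop := Pi_star_coprime dPi Phom Pone gS.
have [u [v]] := Bezoutz g%:Z d%:Z; rewrite /gcdz /= cop => euv.
have [j1 [j2 [[z1 [h1 n1]] [z2 [h2 n2]] e]]] := gmul (- i * u).
exists z1, z2, j1, j2; split=> //; rewrite -e; apply/dvdzP; exists (i * v).
have euv1 : u * g%:Z + v * d%:Z = 1 := euv.
by rewrite -[X in X + _](mulr1 i) -euv1; ring.
Qed.

End QuotientDegrees.

(** * Extending a derivation of the Veronese subring *)

Section VeroneseDerivation.
Variables (B : idomainType) (Bi : int -> B -> Prop).
Hypothesis HG : Z_grading Bi.
Variable d' : nat.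
Local Notation d := d'.+1.
Local Notation A := (veronese Bi d).
Let HA : is_subring A := veronese_subring HG d.

Lemma veronese_ext_unique (D1 D2 : B -> B) : (d%:R : B) != 0 ->
  derivation D1 -> derivation D2 -> (forall x, A x -> D1 x = D2 x) -> D1 = D2.
Proof.
move=> dn0 HD1 HD2 eqA; have [D1D _] := HD1; have [D2D _] := HD2.
have HT1 := derivation_onT HD1; have HT2 := derivation_onT HD2.
have D10 := der0 (is_subringT B) HT1; have D20 := der0 (is_subringT B) HT2.
apply: functional_extensionality => x; rewrite (hcomp_sum HG x).
rewrite (big_morph D1 D1D D10) (big_morph D2 D2D D20).
apply: eq_bigr => k _; set h := hcomp Bi k x.
have [->|h0] := eqVneq h 0; first by rewrite D10 D20.
apply: (mulfI (x := d%:R * h ^+ d')); first by rewrite mulf_neq0 ?expf_neq0.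
rewrite -(derX (is_subringT B) HT1) // -(derX (is_subringT B) HT2) //.
exact: eqA (veronese_hom_exp HG d (hcomp_hom HG k x)).
Qed.

Variable delta : B -> B.
Hypothesis Hdel : derivation_on A delta.

(* With a := x z1 z2^(d-1), which is in A, a^d = x^d * z1^d (z2^d)^(d-1) and
   the Leibniz rule isolates the second factor times delta (x^d). *)
Lemma dvdr_delta_pow_mul x i z1 z2 j1 j2 :
  Bi i x -> Bi j1 z1 -> Bi j2 z2 -> (d%:Z %| i + (j1 - j2))%Z ->
  dvdr (x ^+ d') (z1 ^+ d * (z2 ^+ d) ^+ d' * delta (x ^+ d)).
Proof.
move=> hx h1 h2 dv; set a := x * (z1 * z2 ^+ d').
have Aa : A a.
  apply: (veronese_hom HG (homM HG hx (homM HG h1 (homX HG d' h2)))).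
  have -> : i + (j1 + j2 * d'%:Z) = (i + (j1 - j2)) + j2 * d%:Z.
    by rewrite -addn1 PoszD; ring.
  by rewrite rpredD // dvdz_mull.
have AX := veronese_hom_exp HG d hx.
set Z := z1 ^+ d * (z2 ^+ d) ^+ d'.
have AZ : A Z :=
  subringM HA (veronese_hom_exp HG d h1) (subringX HA d' (veronese_hom_exp HG d h2)).
have := derX HA Hdel d' Aa.
have -> : a ^+ d = x ^+ d * Z by rewrite /a /Z !exprMn -!exprM mulnC.
rewrite (derM Hdel AX AZ) => e.
have -> : Z * delta (x ^+ d) = d%:R * a ^+ d' * delta a - x ^+ d * delta Z.
  by rewrite -e; ring.
exists (d%:R * (z1 * z2 ^+ d') ^+ d' * delta a - x * delta Z).
by rewrite /a exprMn exprSr; ring.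
Qed.

Hypotheses (HN : noetherian B) (Hnorm : normal_domain B) (Hps : Pi_star Bi d).

Lemma dvdr_delta_pow x i : Bi i x -> x != 0 -> dvdr (x ^+ d') (delta (x ^+ d)).
Proof.
move=> hx x0; rewrite (hcomp_sum HG (delta (x ^+ d))); apply: dvdr_sum => k.
set w := hcomp Bi k _; have hw : Bi k w by apply: hcomp_hom.
have hs := homX HG d' hx; have s0 : x ^+ d' != 0 by apply: expf_neq0.
apply: NNPP => nsw.
have [P [Phom Pone Pdiv]] := homogeneous_height_one_ann HG HN Hnorm hs s0 hw nsw.
have [z1 [z2 [j1 [j2 [h1 h2 n1 n2 dv]]]]] := quot_degree_residue HG i Hps Phom Pone.
have [[_ _ Pprime] _] := Pone.
set sg := z1 ^+ d * (z2 ^+ d) ^+ d'.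
have hsg : Bi (j1 * d%:Z + j2 * d%:Z * d'%:Z) sg :=
  homM HG (homX HG d h1) (homX HG d' (homX HG d h2)).
have [t et] := dvdr_delta_pow_mul hx h1 h2 dv.
suff /Pdiv /Pprime [] : dvdr (x ^+ d') (sg * w).
  - by move/(prime_idealX Pone.1).
  - by move/(prime_idealX Pone.1)/(prime_idealX Pone.1).
exists (hcomp Bi (k + (j1 * d%:Z + j2 * d%:Z * d'%:Z) - i * d'%:Z) t).
by rewrite -(hcompMh HG _ _ hs) -et (hcompMh HG _ _ hsg) addrK.
Qed.

Hypothesis dunit : (d%:R : B) \is a GRing.unit.

Lemma natr_d_neq0 : (d%:R : B) != 0.
Proof. by apply: contraTneq dunit => ->; rewrite unitr0. Qed.

(* The value of the extension D on a homogeneous h, forced by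
   d h^(d-1) D h = delta (h^d). *)
Definition hom_der (x : B) : B :=
  if x == 0 then 0 else
  epsilon (inhabits 0) (fun r => d%:R * x ^+ d' * r = delta (x ^+ d)).

Lemma hom_der0 : hom_der 0 = 0.
Proof. by rewrite /hom_der eqxx. Qed.

Lemma hom_derP i h : Bi i h -> d%:R * h ^+ d' * hom_der h = delta (h ^+ d).
Proof.
move=> hh; rewrite /hom_der; have [->|h0] := eqVneq h 0.
  by rewrite mulr0 expr0n (der0 HA Hdel).
apply: (epsilon_spec _ (fun r => d%:R * h ^+ d' * r = delta (h ^+ d))).
have [t ->] := dvdr_delta_pow hh h0.
by exists (d%:R^-1 * t); rewrite -mulrA mulrCA mulVKr.
Qed.

Lemma hom_der_unique i h r : Bi i h -> h != 0 ->
  d%:R * h ^+ d' * r = delta (h ^+ d) -> hom_der h = r.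
Proof.
move=> hh h0 e; apply: (mulfI (x := d%:R * h ^+ d')).
  by rewrite mulf_neq0 ?natr_d_neq0 ?expf_neq0.
by rewrite e (hom_derP hh).
Qed.

Lemma hom_derM i j u v : Bi i u -> Bi j v ->
  hom_der (u * v) = u * hom_der v + hom_der u * v.
Proof.
move=> hu hv; have [->|u0] := eqVneq u 0; first by rewrite !(mul0r, hom_der0, addr0).
have [->|v0] := eqVneq v 0; first by rewrite !(mulr0, hom_der0, addr0).
apply: (hom_der_unique (homM HG hu hv)); first by rewrite mulf_neq0.
rewrite [(u * v) ^+ d]exprMn (derM Hdel (veronese_hom_exp HG d hu) (veronese_hom_exp HG d hv)).
by rewrite -(hom_derP hu) -(hom_derP hv) !exprMn !exprSr; ring.
Qed.

Lemma hom_der_veronese i h : Bi i h -> A h -> hom_der h = delta h.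
Proof.
move=> hh Ah; have [->|h0] := eqVneq h 0; first by rewrite hom_der0 (der0 HA Hdel).
by apply: (hom_der_unique hh h0); rewrite (derX HA Hdel).
Qed.

(* Multiplying by W = u^(d-1) moves u, v and u + v into A, where delta is additive. *)
Lemma hom_derD i u v : Bi i u -> Bi i v -> hom_der (u + v) = hom_der u + hom_der v.
Proof.
move=> hu hv; have [->|u0] := eqVneq u 0; first by rewrite add0r hom_der0 add0r.
set W := u ^+ d'; have hW : Bi (i * d'%:Z) W by apply: homX.
have W0 : W != 0 by apply: expf_neq0.
have degW x : Bi i x -> Bi (i * d%:Z) (x * W).
  by move=> hx; rewrite -addn1 PoszD mulrDr mulr1 addrC; apply: homM.
have AW x : Bi i x -> A (x * W).
  by move=> hx; apply: (veronese_hom HG (degW x hx)); rewrite dvdz_mull.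
have huv := homD HG hu hv.
have e : delta ((u + v) * W) = delta (u * W) + delta (v * W).
  by rewrite mulrDl (derD Hdel (AW _ hu) (AW _ hv)).
rewrite -(hom_der_veronese (degW _ huv) (AW _ huv)) in e.
rewrite -(hom_der_veronese (degW _ hu) (AW _ hu)) in e.
rewrite -(hom_der_veronese (degW _ hv) (AW _ hv)) in e.
rewrite (hom_derM huv hW) (hom_derM hu hW) (hom_derM hv hW) in e.
by apply: (mulIf W0); apply: (addrI ((u + v) * hom_der W)); rewrite e; ring.
Qed.

Definition ext_der (x : B) : B := \sum_(k <- hsupp Bi x) hom_der (hcomp Bi k x).

Lemma ext_der_uniq x t : uniq t -> (forall k, k \notin t -> hcomp Bi k x = 0) ->
  ext_der x = \sum_(k <- t) hom_der (hcomp Bi k x).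
Proof.
move=> ut Ht; apply: eq_big_uniq_support (hsupp_uniq HG x) ut _ _ => k.
  by move/hcomp_out ->; rewrite hom_der0.
by move/Ht ->; rewrite hom_der0.
Qed.

Lemma ext_derD x y : ext_der (x + y) = ext_der x + ext_der y.
Proof.
set t := undup (hsupp Bi x ++ hsupp Bi y ++ hsupp Bi (x + y)).
have ut : uniq t by apply: undup_uniq.
have out k : k \notin t ->
    [/\ hcomp Bi k x = 0, hcomp Bi k y = 0 & hcomp Bi k (x + y) = 0].
  by rewrite mem_undup !mem_cat !negb_or => /and3P [] /hcomp_out -> /hcomp_out -> /hcomp_out ->.
rewrite !(ext_der_uniq ut); try by move=> k /out [].
rewrite -big_split; apply: eq_bigr => k _.
by rewrite hcompD // (hom_derD (hcomp_hom HG k x) (hcomp_hom HG k y)).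
Qed.

Lemma ext_der0 : ext_der 0 = 0.
Proof. by apply: (addrI (ext_der 0)); rewrite -ext_derD !addr0. Qed.

Lemma ext_der_sum (I : Type) (r : seq I) (F : I -> B) :
  ext_der (\sum_(k <- r) F k) = \sum_(k <- r) ext_der (F k).
Proof. by apply: big_morph; [apply: ext_derD | apply: ext_der0]. Qed.

Lemma ext_der_hom j h : Bi j h -> ext_der h = hom_der h.
Proof.
move=> hh; rewrite (@ext_der_uniq h [:: j]) ?big_seq1 ?(hcomp_id HG hh) // => k.
by rewrite inE => /negbTE kj; rewrite (hcomp_homE HG _ hh) kj.
Qed.

Lemma ext_derM x y : ext_der (x * y) = x * ext_der y + ext_der x * y.
Proof.
set X := hsupp Bi x; set Y := hsupp Bi y.
have xyE : x * y = \sum_(i <- X) \sum_(j <- Y) hcomp Bi i x * hcomp Bi j y.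
  rewrite {1}(hcomp_sum HG x) {1}(hcomp_sum HG y) mulr_suml.
  by apply: eq_bigr => i _; rewrite mulr_sumr.
have xDyE : x * ext_der y = \sum_(i <- X) \sum_(j <- Y) hcomp Bi i x * hom_der (hcomp Bi j y).
  by rewrite {1}(hcomp_sum HG x) mulr_suml; apply: eq_bigr => i _; rewrite mulr_sumr.
have DxyE : ext_der x * y = \sum_(i <- X) \sum_(j <- Y) hom_der (hcomp Bi i x) * hcomp Bi j y.
  by rewrite {1}(hcomp_sum HG y) /ext_der mulr_suml; apply: eq_bigr => i _; rewrite mulr_sumr.
rewrite xyE xDyE DxyE ext_der_sum -big_split; apply: eq_bigr => i _.
rewrite ext_der_sum -big_split; apply: eq_bigr => j _.
have hi := hcomp_hom HG i x; have hj := hcomp_hom HG j y.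
by rewrite (ext_der_hom (homM HG hi hj)) (hom_derM hi hj).
Qed.

Lemma ext_der_derivation : derivation ext_der.
Proof. by split; [apply: ext_derD | apply: ext_derM]. Qed.

Lemma ext_der_extends : extends_on A delta ext_der.
Proof.
move=> x [s [f [_ hf ->]]].
have Af k : A (f k) := veronese_hom HG (hf k) (dvdz_mull _ (dvdzz _)).
rewrite ext_der_sum (der_sum HA Hdel _ Af); apply: eq_bigr => k _.
by rewrite (ext_der_hom (hf k)) (hom_der_veronese (hf k) (Af k)).
Qed.

Lemma ext_der_unique D' : derivation D' -> extends_on A delta D' -> D' = ext_der.
Proof.
move=> HD' D'ext; apply: (veronese_ext_unique natr_d_neq0 HD' ext_der_derivation) => x Ax.
by rewrite D'ext ?ext_der_extends.
Qed.

End VeroneseDerivation.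

Lemma char_zero_natr_neq0 (B : idomainType) n : char_zero B -> (0 < n)%N -> (n%:R : B) != 0.
Proof.
move=> Hc n0; rewrite natf_neq0_pchar /pnat n0 /=.
by apply/allP => p _; rewrite inE /= Hc.
Qed.

(** * Iterated derivations and the delta-degree *)

Section IteratedDerivation.
Variables (B : idomainType) (S : B -> Prop) (delta : B -> B).
Hypotheses (HS : is_subring S) (Hd : derivation_on S delta).
Local Notation dn n x := (iter n delta x).

Lemma iter_der_in n x : S x -> S (dn n x).
Proof. by move=> Sx; elim: n => [|n IH] //=; apply: der_in Hd _ IH. Qed.

Lemma iter_der0 n : dn n 0 = 0.
Proof. by elim: n => [|n IH] //=; rewrite IH (der0 HS Hd). Qed.

Lemma iter_derD n x y : S x -> S y -> dn n (x + y) = dn n x + dn n y.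
Proof.
move=> Sx Sy; elim: n => [|n IH] //=.
by rewrite IH (derD Hd) //; apply: iter_der_in.
Qed.

Lemma iter_derB n x y : S x -> S y -> dn n (x - y) = dn n x - dn n y.
Proof.
move=> Sx Sy; elim: n => [|n IH] //=.
by rewrite IH (derB HS Hd) //; apply: iter_der_in.
Qed.

Lemma iter_der_eq0_le n m x : (n <= m)%N -> dn n x = 0 -> dn m x = 0.
Proof. by move=> /subnK <- e; rewrite iterD e iter_der0. Qed.

Lemma der_muln x c : S x -> delta (x *+ c) = delta x *+ c.
Proof.
move=> Sx; rewrite -mulr_natl -[in RHS]mulr_natl (derM Hd) ?(der_nat HS Hd) ?mul0r ?addr0 //.
exact: subring_nat.
Qed.

Lemma iter_derM n x y : S x -> S y ->
  dn n (x * y) = \sum_(i < n.+1) (dn i x * dn (n - i) y) *+ 'C(n, i).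
Proof.
move=> Sx Sy; have ST i j : S (dn i x * dn j y).
  by apply: (subringM HS); apply: iter_der_in.
elim: n => [|n IH]; first by rewrite big_ord_recl big_ord0 addr0 /= mulr1n.
set T := fun i => dn i x * dn (n.+1 - i) y.
rewrite iterS IH (der_sum HS Hd); last first.
  by move=> i; rewrite -mulr_natl; apply: (subringM HS); [apply: subring_nat | apply: ST].
rewrite (eq_bigr (fun i : 'I_n.+1 => T i *+ 'C(n, i) + T i.+1 *+ 'C(n, i))); last first.
  move=> [i ilt] _ /=; rewrite der_muln // (derM Hd (iter_der_in _ Sx) (iter_der_in _ Sy)).
  by rewrite -mulrnDl /T subSn // subSS.
rewrite big_split /= [in RHS]big_ord_recl /= bin0 mulr1n.
rewrite [in RHS](eq_bigr (fun i : 'I_n.+1 => T i.+1 *+ 'C(n, i.+1) + T i.+1 *+ 'C(n, i))).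
  rewrite big_split /= addrA; congr (_ + _).
  have -> : \sum_(i < n.+1) T i *+ 'C(n, i) = \sum_(i < n.+2) T i *+ 'C(n, i).
    by rewrite [RHS]big_ord_recr /= bin_small // mulr0n addr0.
  by rewrite big_ord_recl /= bin0 mulr1n.
by move=> i _; rewrite /bump /= add1n binS mulrnDr.
Qed.

Definition ddeg_le x n := dn n.+1 x = 0.

Definition ddeg_eq x n := dn n x != 0 /\ ddeg_le x n.

Lemma ddeg_le_mono x p q : (p <= q)%N -> ddeg_le x p -> ddeg_le x q.
Proof. by move=> pq; apply: iter_der_eq0_le; rewrite ltnS. Qed.

Lemma ddeg_le_nat n : ddeg_le n%:R 0.
Proof. exact: der_nat HS Hd n. Qed.

Lemma ddeg_le_der x p : ddeg_le x p -> ddeg_le (delta x) p.-1.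
Proof.
rewrite /ddeg_le; case: p => [|p] e; last by rewrite -iterSr.
by move: e => /= ->; rewrite (der0 HS Hd).
Qed.

Lemma ddeg_leD x y p : S x -> S y -> ddeg_le x p -> ddeg_le y p -> ddeg_le (x + y) p.
Proof. by move=> Sx Sy hx hy; rewrite /ddeg_le iter_derD // hx hy addr0. Qed.

Lemma ddeg_leB x y p : S x -> S y -> ddeg_le x p -> ddeg_le y p -> ddeg_le (x - y) p.
Proof. by move=> Sx Sy hx hy; rewrite /ddeg_le iter_derB // hx hy subr0. Qed.

Lemma ddeg_leM x y p q : S x -> S y -> ddeg_le x p -> ddeg_le y q -> ddeg_le (x * y) (p + q).
Proof.
move=> Sx Sy hx hy; rewrite /ddeg_le iter_derM //; apply: big1 => -[i ilt] _ /=.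
have [ip|pi] := leqP i p; last by rewrite (iter_der_eq0_le pi hx) mul0r mul0rn.
by rewrite (@iter_der_eq0_le q.+1 _ y) ?mulr0 ?mul0rn //; lia.
Qed.

Lemma ddeg_leX x p n : S x -> ddeg_le x p -> ddeg_le (x ^+ n) (n * p).
Proof.
move=> Sx hx; elim: n => [|n IH]; first by rewrite expr0 mul0n; apply: (ddeg_le_nat 1).
by rewrite exprS mulSn; apply: ddeg_leM => //; apply: subringX.
Qed.

Lemma ddeg_eq_le x p q : ddeg_eq x p -> ddeg_le x q -> (p <= q)%N.
Proof.
case=> nx _ hq; rewrite leqNgt; apply: contra nx => qp.
by rewrite (iter_der_eq0_le qp hq).
Qed.

Lemma ddeg_eq_exists x : S x -> x != 0 -> locally_nilpotent_on S delta ->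
  exists n, ddeg_eq x n.
Proof.
move=> Sx x0 HLN; have ex : exists n, dn n x == 0.
  by have [n e] := HLN x Sx; exists n; apply/eqP.
case: (ex_minnP ex) => -[|n] en nmin; first by rewrite /= (negPf x0) in en.
exists n; split; last exact/eqP.
by apply/eqP => e; move: (nmin n); rewrite e eqxx ltnn => /(_ isT).
Qed.

Hypothesis Hc : char_zero B.

Lemma ddeg_eqM x y p q : S x -> S y -> ddeg_eq x p -> ddeg_eq y q -> ddeg_eq (x * y) (p + q).
Proof.
move=> Sx Sy [nx hx] [ny hy]; split; last exact: ddeg_leM.
rewrite iter_derM // (bigD1 (@Ordinal (p + q).+1 p (leq_addr q p))) //= big1 ?addr0.
  rewrite addKn -mulr_natl !mulf_neq0 // char_zero_natr_neq0 //.
  by rewrite bin_gt0 leq_addr.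
move=> [i ilt] /= /eqP ne; have [ip|pi|ip] := ltngtP i p.
- by rewrite (@iter_der_eq0_le q.+1 _ y) ?mulr0 ?mul0rn //; lia.
- by rewrite (iter_der_eq0_le pi hx) mul0r mul0rn.
- by case: ne; apply: val_inj.
Qed.

Lemma ddeg_eqX x p k : S x -> ddeg_eq x p -> ddeg_eq (x ^+ k) (k * p).
Proof.
move=> Sx hx; elim: k => [|k IH].
  by rewrite expr0 mul0n; split; [apply: oner_neq0 | apply: (ddeg_le_nat 1)].
by rewrite exprS mulSn; apply: ddeg_eqM => //; apply: subringX.
Qed.

End IteratedDerivation.

Lemma locally_nilpotent_hom (B : idomainType) (Bi : int -> B -> Prop) (D : B -> B) :
  Z_grading Bi -> derivation D -> (forall i b, Bi i b -> exists n, iter n D b = 0) ->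
  locally_nilpotent D.
Proof.
move=> HG HD Dhom x; rewrite (hcomp_sum HG x).
have HT := derivation_onT HD; have HS := is_subringT B.
elim: (hsupp Bi x) => [|a r [n2 IH]]; first by exists 0%N; rewrite big_nil.
have [n1 h1] := Dhom _ _ (hcomp_hom HG a x).
exists (n1 + n2)%N; rewrite big_cons (iter_derD HT) //.
by rewrite [in X in X + _]addnC !iterD h1 IH !(iter_der0 HS HT) addr0.
Qed.

Section ExtIterCoef.
Variables (B : idomainType) (delta : B -> B) (d : nat) (Y : B).

(* Applying D to (d Y)^k D^k b = b * ext_iter_coef k and using d Y D b = b delta Y,
   for Y = b^d, gives the recursion. *)
Fixpoint ext_iter_coef (k : nat) : B :=
  if k is k'.+1 then
    ext_iter_coef k' * delta Y + d%:R * Y * delta (ext_iter_coef k')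
    - d%:R * k'%:R * delta Y * ext_iter_coef k'
  else 1.

Variable S : B -> Prop.
Hypotheses (HS : is_subring S) (Hd : derivation_on S delta) (SY : S Y).

Lemma ext_iter_coef_in k : S (ext_iter_coef k).
Proof.
have Sd x : S x -> S (delta x) := @der_in _ _ _ Hd x.
have SM x y : S x -> S y -> S (x * y) := @subringM _ _ HS x y.
have Sn n : S n%:R := subring_nat HS n.
elim: k => [|k IH] /=; first exact: subring1 HS.
apply: (subringB HS); first apply: (subringD HS).
- exact: SM _ _ IH (Sd _ SY).
- exact: SM _ _ (SM _ _ (Sn d) SY) (Sd _ IH).
- exact: SM _ _ (SM _ _ (SM _ _ (Sn d) (Sn k)) (Sd _ SY)) IH.
Qed.

Lemma ext_iter_coef_ddeg m k : ddeg_le delta Y m.+1 -> ddeg_le delta (ext_iter_coef k) (k * m).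
Proof.
move=> hY; have hdY := ddeg_le_der HS Hd hY.
have Sd x : S x -> S (delta x) := @der_in _ _ _ Hd x.
have SM x y : S x -> S y -> S (x * y) := @subringM _ _ HS x y.
have Sn n : S n%:R := subring_nat HS n.
have hn n : ddeg_le delta n%:R 0 := ddeg_le_nat HS Hd n.
elim: k => [|k IH] /=; first exact: hn 1%N.
have Sb := ext_iter_coef_in k; set b := ext_iter_coef k in Sb IH *.
have S1 : S (b * delta Y) := SM _ _ Sb (Sd _ SY).
have S2 : S (d%:R * Y * delta b) := SM _ _ (SM _ _ (Sn d) SY) (Sd _ Sb).
have S3 : S (d%:R * k%:R * delta Y * b) := SM _ _ (SM _ _ (SM _ _ (Sn d) (Sn k)) (Sd _ SY)) Sb.
apply: (ddeg_leB HS Hd (subringD HS S1 S2) S3); first apply: (ddeg_leD Hd S1 S2).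
- by rewrite mulSn addnC; apply: (ddeg_leM HS Hd Sb (Sd _ SY) IH hdY).
- have [km0|km] := posnP (k * m).
    move: IH; rewrite km0 /ddeg_le /= => ->; rewrite mulr0.
    exact: iter_der0 HS Hd (k.+1 * m).+1.
  have hdY' : ddeg_le delta (d%:R * Y) (0 + m.+1) := ddeg_leM HS Hd (Sn d) SY (hn d) hY.
  have := ddeg_leM HS Hd (SM _ _ (Sn d) SY) (Sd _ Sb) hdY' (ddeg_le_der HS Hd IH).
  by move=> H; apply: (ddeg_le_mono HS Hd _ H); rewrite mulSn; lia.
- have hdk : ddeg_le delta (d%:R * k%:R) (0 + 0) := ddeg_leM HS Hd (Sn d) (Sn k) (hn d) (hn k).
  have := ddeg_leM HS Hd (SM _ _ (SM _ _ (Sn d) (Sn k)) (Sd _ SY)) Sb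
    (ddeg_leM HS Hd (SM _ _ (Sn d) (Sn k)) (Sd _ SY) hdk hdY) IH.
  by move=> H; apply: (ddeg_le_mono HS Hd _ H); rewrite mulSn.
Qed.

End ExtIterCoef.

Section ExtDerNilpotent.
Variables (B : idomainType) (Bi : int -> B -> Prop).
Hypotheses (HG : Z_grading Bi) (HN : noetherian B) (Hnorm : normal_domain B).
Hypothesis Hc : char_zero B.
Variable d' : nat.
Local Notation d := d'.+1.
Hypotheses (Hps : Pi_star Bi d) (dunit : (d%:R : B) \is a GRing.unit).
Local Notation A := (veronese Bi d).
Variable delta : B -> B.
Hypotheses (Hdel : derivation_on A delta) (HLN : locally_nilpotent_on A delta).
Local Notation D := (ext_der Bi d' delta).
Let HA : is_subring A := veronese_subring HG d.
Let HD : derivation D := ext_der_derivation HG Hdel HN Hnorm Hps dunit.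

Lemma ext_der_hom_pow i b : Bi i b -> d%:R * b ^+ d * D b = b * delta (b ^+ d).
Proof.
move=> hb; rewrite (ext_der_hom HG _ _ hb) -(hom_derP HG Hdel HN Hnorm Hps dunit hb).
by rewrite exprSr; ring.
Qed.

Lemma ext_iter_coefE i b k : Bi i b ->
  (d%:R * b ^+ d) ^+ k * iter k D b = b * ext_iter_coef delta d (b ^+ d) k.
Proof.
move=> hb; set Y := b ^+ d; have AY : A Y := veronese_hom_exp HG d hb.
have [DD DM] := HD; have Dext := ext_der_extends HG Hdel HN Hnorm Hps dunit.
have AdY : A (d%:R * Y) := subringM HA (subring_nat HA d) AY.
have dYE : delta (d%:R * Y) = d%:R * delta Y.
  by rewrite (derM Hdel (subring_nat HA d) AY) (der_nat HA Hdel) mul0r addr0.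
have DdYk n : d%:R * Y * D ((d%:R * Y) ^+ n) = n%:R * d%:R * delta Y * (d%:R * Y) ^+ n.
  rewrite Dext; last exact: subringX.
  case: n => [|n]; first by rewrite !expr0 (der1 HA Hdel); ring.
  by rewrite (derX HA Hdel) // dYE exprS; ring.
elim: k => [|k IH]; first by rewrite expr0 mul1r mulr1.
set c := (d%:R * Y) ^+ k in IH *; set E := iter k D b in IH *.
set bt := ext_iter_coef delta d Y k in IH *.
have Ac : A c := subringX HA k AdY.
have Abt : A bt := ext_iter_coef_in d HA Hdel AY k.
have Dc := DdYk k; rewrite -/c in Dc.
have := congr1 D IH; rewrite !DM (Dext bt Abt) => eD.
have -> : (d%:R * Y) ^+ k.+1 * iter k.+1 D b = d%:R * Y * (c * D E).
  by rewrite exprSr /= -/c -/E; ring.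
have -> : c * D E = b * delta bt + D b * bt - D c * E by rewrite -eD; ring.
have hK : d%:R * Y * D b = b * delta Y := ext_der_hom_pow hb.
rewrite mulrBr mulrDr !mulrA hK Dc -(mulrA _ c E) IH /= -/bt; ring.
Qed.

(* With Y = b^d of delta-degree m + 1 and k = m + 2, the identity
   ((d Y)^k D^k b)^d = Y (ext_iter_coef k)^d puts (D^k b)^d in A; if it were
   nonzero, the left side would have delta-degree at least d k (m + 1), while
   the right side has delta-degree at most m + 1 + d k m. *)
Lemma ext_der_nilpotent_hom i b : Bi i b -> exists n, iter n D b = 0.
Proof.
move=> hb; have [->|b0] := eqVneq b 0; first by exists 0%N.
set Y := b ^+ d; have AY : A Y := veronese_hom_exp HG d hb.
have Y0 : Y != 0 by apply: expf_neq0.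
have dn0 : (d%:R : B) != 0 := natr_d_neq0 dunit.
have [[|m] hYm] := ddeg_eq_exists AY Y0 HLN; have [_ hm] := hYm.
  exists 1%N; apply/eqP; have := ext_der_hom_pow hb; rewrite -/Y (hm : delta Y = 0) mulr0.
  by move/eqP; rewrite !mulf_eq0 (negbTE dn0) (negbTE Y0).
set k := m.+2; set E := iter k D b; set c := (d%:R * Y) ^+ k.
set bt := ext_iter_coef delta d Y k.
have cE : c * E = b * bt := ext_iter_coefE k hb.
have AdY : A (d%:R * Y) := subringM HA (subring_nat HA d) AY.
have Abt : A bt := ext_iter_coef_in d HA Hdel AY k.
have c0 : c != 0 by rewrite expf_neq0 // mulf_neq0.
have cdEd : c ^+ d * E ^+ d = Y * bt ^+ d by rewrite -exprMn cE exprMn.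
have AEd : A (E ^+ d).
  apply: (veronese_cancel HG (subringX HA d (subringX HA k AdY))); first exact: expf_neq0.
  by rewrite -/c cdEd; apply: (subringM HA AY); apply: subringX.
exists k; apply/eqP; suff : E ^+ d == 0 by rewrite expf_eq0 => /andP [].
apply: contraT => Ed0.
have [e he] := ddeg_eq_exists AEd Ed0 HLN.
have hdY : ddeg_eq delta (d%:R * Y) (0 + m.+1).
  apply: (ddeg_eqM HA Hdel Hc (subring_nat HA d) AY) => //.
  by split; [exact: dn0 | exact: ddeg_le_nat HA Hdel d].
have hc := ddeg_eqX HA Hdel Hc d (subringX HA k AdY) (ddeg_eqX HA Hdel Hc k AdY hdY).
have := ddeg_eq_le HA Hdel (ddeg_eqM HA Hdel Hc (subringX HA d (subringX HA k AdY)) AEd hc he).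
rewrite cdEd; move/(_ (m.+1 + d * (k * m))%N).
have hbt := ext_iter_coef_ddeg d HA Hdel AY k hm.
have := ddeg_leM HA Hdel AY (subringX HA d Abt) hm (ddeg_leX HA Hdel d Abt hbt).
by move=> /[swap] /[apply]; rewrite /k; nia.
Qed.

End ExtDerNilpotent.

Theorem theorem3p2 (B : idomainType) (Bi : int -> B -> Prop) :
  Z_grading Bi -> noetherian B -> normal_domain B -> char_zero B -> e_eq1 Bi ->
  forall d : nat, Pi_star Bi d -> (d%:R : B) \is a GRing.unit ->
  (forall delta : B -> B, derivation_on (veronese Bi d) delta ->
     exists D : B -> B,
       (derivation D /\ extends_on (veronese Bi d) delta D) /\
       (forall D' : B -> B, derivation D' -> extends_on (veronese Bi d) delta D' ->
          D' = D)) /\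
  (forall delta : B -> B, derivation_on (veronese Bi d) delta ->
     locally_nilpotent_on (veronese Bi d) delta ->
     exists D : B -> B,
       (derivation D /\ locally_nilpotent D /\ extends_on (veronese Bi d) delta D) /\
       (forall D' : B -> B, derivation D' -> locally_nilpotent D' ->
          extends_on (veronese Bi d) delta D' -> D' = D)).
Proof.
move=> HG HN Hnorm Hc _ [|d'] Hps dunit; first by case: Hps.
split=> delta Hdel => [|HLN]; exists (ext_der Bi d' delta);
  have HD := ext_der_derivation HG Hdel HN Hnorm Hps dunit;
  have Dext := ext_der_extends HG Hdel HN Hnorm Hps dunit;
  have Duniq := ext_der_unique HG Hdel HN Hnorm Hps dunit.
  by split=> //; apply: Duniq.
split=> [|D' HD' _]; last exact: Duniq.
split=> //; split=> //; apply: (locally_nilpotent_hom HG HD) => i b hb.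
exact: (ext_der_nilpotent_hom HG HN Hnorm Hc Hps dunit Hdel HLN hb).
Qed.
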